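(* Let $n\ge2$ and let $\mathfrak g=\mathbb Rf_1\ltimes\mathbb R^{2n+1}$ be the Lie algebra in which $\mathbb R^{2n+1}$ is an abelian ideal and $\operatorname{ad}_{f_1}|_{\mathbb R^{2n+1}}$ is diagonalizable with eigenvalues $0,\frac1n,\frac2n,\dots,1,-\frac1n,-\frac2n,\dots,-1$ (each simple). Let $\beta^n_k=\dim H^k(\mathfrak g)$ be the Betti numbers of the Chevalley–Eilenberg cohomology of $\mathfrak g$ with trivial real coefficients. Then: (i) $\beta^n_0=1$, $\beta^n_1=2$ and $\beta^n_2=n+1$; (ii) if $n$ is even then $\beta^n_3=\frac{n(n+2)}2$, and if $n$ is odd then $\beta^n_3=\frac{(n+1)^2}2$; (iii) if $k$ is odd then $\beta^n_k$ is even; (iv) $\beta^n_{2k}\equiv\binom{n+1}k\pmod 2$.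
   Context: These are also the de Rham Betti numbers of any compact quotient of the simply connected Lie group of $\mathfrak g$ by a lattice. *)

From HB Require Import structures.
From mathcomp Require Import all_boot all_order all_algebra.
From mathcomp Require Import reals.
Set Implicit Arguments. Unset Strict Implicit. Unset Printing Implicit Defensive.
Import Order.TTheory GRing.Theory Num.Theory.
Local Open Scope ring_scope.

(* Chevalley--Eilenberg cohomology (trivial coefficients) of a finite-dimensional
   Lie algebra over a field F, given by structure constants in a basis
   e_0, ..., e_{m-1}:   [e_i, e_j] = \sum_l c i j l e_l.
   The k-cochains Lambda^k g^* have basis the e^S, S a k-subset of 'I_m
   (e^S is the alternating form with value 1 on (e_{s_0},...,e_{s_{k-1}}),
   s_0 < ... < s_{k-1}).  The differential is the standard one
     d w (x_0,...,x_k) = \sum_{a<b} (-1)^(a+b) w([x_a,x_b], x_0,..^a..^b..,x_k). *)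
Section CE.
Variables (F : fieldType) (m : nat) (c : 'I_m -> 'I_m -> 'I_m -> F).

Definition setpos (T : {set 'I_m}) (x : 'I_m) : nat := #|[set t in T | (t < x)%N]|.

(* value of the basis cochain e^S on the tuple (e_l, e_{r_1},...,e_{r_q}),
   r_1 < ... < r_q the elements of Rs *)
Definition ev_basis (S Rs : {set 'I_m}) (l : 'I_m) : F :=
  if (l \notin Rs) && (S == l |: Rs) then (-1) ^+ setpos Rs l else 0.

(* coefficient of e^T in d(e^S) *)
Definition ce_entry (S T : {set 'I_m}) : F :=
  \sum_(i in T) \sum_(j in T | (i < j)%N)
     (-1) ^+ (setpos T i + setpos T j) *
     \sum_(l < m) c i j l * ev_basis S (T :\ i :\ j) l.

Definition sidx (i : 'I_#|{set 'I_m}|) : {set 'I_m} := enum_val i.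

(* matrix of the total differential on Lambda g^* (row-vector convention:
   the cochain u is sent to u *m ce_diff) *)
Definition ce_diff : 'M[F]_#|{set 'I_m}| :=
  \matrix_(i, j) ce_entry (sidx i) (sidx j).

Definition ce_deg (k : nat) : 'M[F]_#|{set 'I_m}| :=
  \matrix_(i, j) (if (i == j) && (#|sidx i| == k) then 1 else 0).

Definition ce_cocycles (k : nat) := (ce_deg k :&: kermx ce_diff)%MS.
Definition ce_coboundaries (k : nat) : 'M[F]_#|{set 'I_m}| :=
  match k with 0 => 0 | k'.+1 => ce_deg k' *m ce_diff end.

Definition betti (k : nat) : nat :=
  (\rank (ce_cocycles k) - \rank (ce_coboundaries k))%N.
End CE.

(* The Lie algebra g = R f_1 |x R^{2n+1}: basis e_0 = f_1, e_1,...,e_{2n+1}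
   spanning the abelian ideal, with [f_1, e_j] = lambda_j e_j where
   lambda_j = (j - (n+1))/n, so that the lambda_j run through
   -1, ..., -1/n, 0, 1/n, ..., 1, each once. *)
Definition gweight (R : realType) (n : nat) (j : nat) : R :=
  ((j%:R - n.+1%:R) / n%:R).

Definition g_struct (R : realType) (n : nat)
  (i j l : 'I_(n.*2.+2)) : R :=
  if (val i == 0%N) && (val j != 0%N) && (l == j) then gweight R n j
  else if (val j == 0%N) && (val i != 0%N) && (l == i) then - gweight R n i
  else 0.
Arguments g_struct R n i j l : clear implicits.

From mathcomp Require Import all_boot all_order all_algebra.
From mathcomp Require Import reals zify.
Set Implicit Arguments. Unset Strict Implicit. Unset Printing Implicit Defensive.
Import Order.TTheory GRing.Theory Num.Theory.
Local Open Scope ring_scope.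

(* For g = F e_0 |x V with e_0 acting diagonally on V with weights lam_j, the
   differential sends e^S to -(\sum_(j in S) lam_j) e^0 /\ e^S when 0 \notin S
   and kills e^S otherwise.  In the monomial basis it is thus a rescaled
   partial permutation matrix, and b_k = z_k + z_(k-1), where z_k counts the
   k-subsets of the weights of V with zero sum.
   Here the n lam_j run through -n, ..., n, so z_0 = z_1 = 1 and z_2 = n.
   Splitting off the pair +-(n+1) gives a recursion in n for z_3, and
   z_(k+2)(n+1) = z_(k+2)(n) + z_k(n) (mod 2), since the two mixed terms are
   exchanged by s |-> -s.  Hence z_k = 'C(n, k/2) (mod 2), and the parity
   statements follow from Pascal's rule. *)

Fixpoint subsum_count (L : seq int) (k : nat) (s : int) : nat :=
  match L with
  | [::] => ((k == 0%N) && (s == 0) : nat)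
  | x :: L' =>
      (subsum_count L' k s + if k is k'.+1 then subsum_count L' k' (s - x) else 0)%N
  end.

Fixpoint sym_weights (n : nat) : seq int :=
  if n is n'.+1 then n%:Z :: - n%:Z :: sym_weights n' else [:: 0].

Lemma subsum_count0 L s : subsum_count L 0 s = (s == 0).
Proof. by elim: L s => [|x L IHL] s /=; rewrite ?addn0 ?IHL. Qed.

Lemma subsum_count_opp L k s :
  subsum_count (map -%R L) k (- s) = subsum_count L k s.
Proof.
elim: L k s => [|x L IHL] k s /=; first by rewrite oppr_eq0.
by rewrite IHL; case: k => [|k] //; rewrite -opprD IHL.
Qed.

Lemma subsum_count_swap x y L k s :
  subsum_count [:: x, y & L] k s = subsum_count [:: y, x & L] k s.
Proof.
case: k => [|[|k]] /=; rewrite ?addn0 //; first by rewrite addnAC.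
by rewrite (addrAC s (- y)) !addnA; congr (_ + _)%N; rewrite addnAC.
Qed.

Lemma subsum_count_sym_weights_opp n k s :
  subsum_count (map -%R (sym_weights n)) k s = subsum_count (sym_weights n) k s.
Proof.
elim: n k s => [|n IHn] k s; first by rewrite /= oppr0.
rewrite [map _ _]/= opprK subsum_count_swap /=.
by case: k => [|[|k]]; rewrite ?IHn.
Qed.

Lemma subsum_count_sym_weightsN n k s :
  subsum_count (sym_weights n) k (- s) = subsum_count (sym_weights n) k s.
Proof. by rewrite -subsum_count_sym_weights_opp subsum_count_opp. Qed.

Lemma subsum_count1_sym_weights n s :
  subsum_count (sym_weights n) 1 s = (- n%:Z <= s <= n%:Z).
Proof.
elim: n s => [|n IHn] s /=; rewrite ?subsum_count0 ?IHn ?addn0 ?subr0; lia.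
Qed.

Lemma subsum_count2_sym_weights n s :
  subsum_count (sym_weights n) 2 s = (n - (absz s)./2)%N.
Proof.
elim: n s => [|n IHn] s /=; rewrite ?subsum_count0 ?subsum_count1_sym_weights ?IHn //.
by case: s => p; lia.
Qed.

Lemma subsum_count3_sym_weightsS n :
  subsum_count (sym_weights n.+1) 3 0 =
  (subsum_count (sym_weights n) 3 0 + (n./2).*2 + 1)%N.
Proof.
by rewrite /= ?subsum_count0 ?subsum_count1_sym_weights ?subsum_count2_sym_weights; lia.
Qed.

Lemma subsum_count3_sym_weights n :
  (subsum_count (sym_weights n) 3 0 + n =
   if odd n then (n + 1) ^ 2 %/ 2 else n * (n + 2) %/ 2)%N.
Proof.
elim: n => [|n IHn] //; rewrite subsum_count3_sym_weightsS /=.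
by have := odd_double_half n; case: (odd n) IHn => /= IHn n_eq; nia.
Qed.

Lemma odd_subsum_count_sym_weights n k :
  odd (subsum_count (sym_weights n) k 0) = odd 'C(n, k./2).
Proof.
elim: n k => [|n IHn] [|[|k]] //; first by rewrite subsum_count0 bin0.
  by rewrite subsum_count1_sym_weights bin0 oppr_le0 andbb.
have half2 : k.+2./2 = (k./2).+1 by [].
rewrite half2 binS [subsum_count (sym_weights n.+1) _ _]/= !sub0r opprK addNr.
rewrite -(subsum_count_sym_weightsN n k.+1 n.+1%:Z) !oddD !IHn half2.
by rewrite addbA addbK.
Qed.

Lemma mem_sym_weights n x : (x \in sym_weights n) = (- n%:Z <= x <= n%:Z).
Proof. by elim: n => [|n IHn] /=; rewrite !inE ?IHn; lia. Qed.

Lemma uniq_sym_weights n : uniq (sym_weights n).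
Proof. by elim: n => [|n IHn] //=; rewrite IHn !inE !mem_sym_weights andbT; lia. Qed.

Section SubsetSums.
Variables (T : finType) (w : T -> int).

Definition subsets_with_sum (A : {set T}) (k : nat) (s : int) : {set {set T}} :=
  [set S : {set T} | [&& S \subset A, #|S| == k & \sum_(x in S) w x == s]].

Lemma card_subsets_with_sum0 (A : {set T}) s : #|subsets_with_sum A 0 s| = (s == 0).
Proof.
rewrite (_ : subsets_with_sum A 0 s = if s == 0 then [set set0] else set0).
  by case: eqP; rewrite ?cards1 ?cards0.
apply/setP => S; rewrite !inE cards_eq0.
have [->|nS0] := eqVneq S set0; rewrite /= ?andbF.
  by rewrite sub0set big_set0 eq_sym; case: eqP; rewrite ?inE ?eqxx.
by case: eqP; rewrite ?inE // (negbTE nS0).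
Qed.

Lemma card_subsets_with_sum_set0 k s : #|subsets_with_sum set0 k.+1 s| = 0%N.
Proof.
apply: eq_card0 => S; rewrite !inE subset0.
by apply/negP => /and3P[/eqP -> /eqP]; rewrite cards0.
Qed.

Lemma subsets_with_sumU1_mem (x : T) (A : {set T}) k s : x \notin A ->
  subsets_with_sum (x |: A) k.+1 s :\: [set S : {set T} | x \notin S] =
  [set x |: S | S in subsets_with_sum A k (s - w x)].
Proof.
move=> xA; apply/setP => S; rewrite !inE negbK; apply/idP/imsetP.
  case/and4P=> xS sSxA /eqP cardS /eqP sumS; exists (S :\ x); last by rewrite setD1K.
  rewrite inE subDset sSxA -sumS (big_setD1 x xS) addrC addKr eqxx andbT.
  by move: cardS; rewrite (cardsD1 x S) xS add1n => -[->]; rewrite eqxx.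
case=> S'; rewrite inE => /and3P[sS'A /eqP cardS' /eqP sumS'] ->.
have xS' : x \notin S' by apply: contra xA; apply: (subsetP sS'A).
by rewrite setU11 setUS // cardsU1 xS' cardS' big_setU1 //= sumS' addrC subrK !eqxx.
Qed.

Lemma card_subsets_with_sumU1 (x : T) (A : {set T}) k s : x \notin A ->
  #|subsets_with_sum (x |: A) k.+1 s| =
  (#|subsets_with_sum A k.+1 s| + #|subsets_with_sum A k (s - w x)|)%N.
Proof.
move=> xA; rewrite -(cardsID [set S : {set T} | x \notin S]); congr (_ + _)%N.
  apply: eq_card => S; rewrite !inE -[in RHS](setU1K xA) subsetD1.
  by rewrite andbAC.
rewrite subsets_with_sumU1_mem // card_in_imset // => S1 S2.
rewrite !inE => /andP[sS1A _] /andP[sS2A _].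
have xS1 : x \notin S1 by apply: contra xA; apply: (subsetP sS1A).
have xS2 : x \notin S2 by apply: contra xA; apply: (subsetP sS2A).
by move=> eqS; rewrite -(setU1K xS1) -(setU1K xS2) eqS.
Qed.

Lemma card_subsets_with_sum (r : seq T) k s : uniq r ->
  #|subsets_with_sum [set x in r] k s| = subsum_count (map w r) k s.
Proof.
elim: r k s => [|x r IHr] [|k] s; rewrite ?card_subsets_with_sum0 ?subsum_count0 //.
  by rewrite set_nil card_subsets_with_sum_set0.
by case/andP=> xr ur; rewrite set_cons card_subsets_with_sumU1 ?inE // !(IHr _ _ ur).
Qed.

End SubsetSums.

Lemma mxrank_partial_monomial (F : fieldType) m n (M : 'M[F]_(m, n))
    (A : {set 'I_m}) (a : 'I_m -> F) (g : 'I_m -> 'I_n) :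
  {in A, forall i, a i != 0} -> {in A &, injective g} ->
  (forall i j, M i j = if i \in A then a i * (g i == j)%:R else 0) ->
  \rank M = #|A|.
Proof.
move=> a_neq0 g_inj ME.
pose f (i : 'I_#|A|) : 'I_m := enum_val i.
have fA i : f i \in A by exact: enum_valP.
have eqM_rowsub : (M == rowsub f M)%MS.
  rewrite rowsub_sub andbT; apply/row_subP => i.
  have [iA|iA] := boolP (i \in A).
    by rewrite -(enum_rankK_in iA iA) -row_rowsub row_sub.
  rewrite (_ : row i M = 0) ?sub0mx //.
  by apply/rowP => j; rewrite !mxE ME (negbTE iA).
pose Q : 'M[F]_(n, #|A|) := \matrix_(j, i) (g (f i) == j)%:R.
have MQ_diag : rowsub f M *m Q = diag_mx (\row_i a (f i)).
  apply/matrixP => i i'; rewrite !mxE (bigD1 (g (f i))) //= big1 ?addr0.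
    rewrite !mxE ME fA eqxx mulr1; have [<-|ne] := eqVneq i i'.
      by rewrite eqxx mulr1.
    case: eqP => [/(g_inj _ _ (fA _) (fA _))/enum_val_inj eq_i'i|_].
      by rewrite eq_i'i eqxx in ne.
    by rewrite mulr0.
  by move=> j jne; rewrite !mxE ME fA eq_sym (negbTE jne) mulr0 mul0r.
have MQ_unit : rowsub f M *m Q \in unitmx.
  rewrite MQ_diag unitmxE det_diag unitfE prodf_seq_neq0.
  by apply/allP => i _; rewrite mxE a_neq0.
rewrite (eqmxP eqM_rowsub); apply/eqP; rewrite eqn_leq rank_leq_row /=.
by rewrite -{1}(mxrank_unit MQ_unit) mxrankM_maxl.
Qed.

Lemma card_sidx m (P : pred {set 'I_m}) :
  #|[set i | P (sidx i)]| = #|[set S | P S]|.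
Proof.
rewrite -(card_imset _ (@enum_val_inj _ _)); apply: eq_card => S.
rewrite inE; apply/imsetP/idP => [[i]|PS]; first by rewrite inE => Pi ->.
by exists (enum_rank S); rewrite ?inE /sidx enum_rankK.
Qed.

Lemma mxrank_ce_deg (F : fieldType) m k :
  \rank (ce_deg F m k) = #|[set S : {set 'I_m} | #|S| == k]|.
Proof.
rewrite -card_sidx; apply: (@mxrank_partial_monomial _ _ _ _ _ (fun=> 1) id) => //.
  by move=> i _; rewrite oner_eq0.
by move=> i j; rewrite mxE inE mul1r; case: (_ == k); case: (i == j).
Qed.

Lemma ev_basis_setD1 (F : fieldType) m (S T : {set 'I_m}) j : j \in T ->
  ev_basis F S (T :\ j) j = if S == T then (-1) ^+ setpos (T :\ j) j else 0.
Proof. by move=> jT; rewrite /ev_basis setD11 setD1K. Qed.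

Section DiagonalAction.
Variables (F : fieldType) (m : nat) (lam : 'I_m.+1 -> F).
Local Notation o := (ord0 : 'I_m.+1).

Definition diag_action_struct (i j l : 'I_m.+1) : F :=
  if (i == o) && (j != o) && (l == j) then lam j
  else if (j == o) && (i != o) && (l == i) then - lam i
  else 0.

Lemma setpos_ord0 (T : {set 'I_m.+1}) : setpos T o = 0%N.
Proof. by apply: eq_card0 => t; rewrite !inE ltn0 andbF. Qed.

Lemma setposD1_ord0 (T : {set 'I_m.+1}) j : o \in T -> j != o ->
  setpos T j = (setpos (T :\ o :\ j) j).+1.
Proof.
move=> oT jo; rewrite /setpos (cardsD1 o) inE oT lt0n jo add1n; congr _.+1.
apply: eq_card => t; rewrite !inE.
by have [->|tj] := eqVneq t j; rewrite ?ltnn ?andbF //= andbA.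
Qed.

Lemma diag_action_bracket (S R : {set 'I_m.+1}) (i j : 'I_m.+1) : (i < j)%N ->
  \sum_(l < m.+1) diag_action_struct i j l * ev_basis F S R l =
  if i == o then lam j * ev_basis F S R j else 0.
Proof.
move=> ij; have j0 : (j == o) = false.
  by apply/negbTE; rewrite -lt0n (leq_ltn_trans _ ij).
rewrite (bigD1 j) //= big1 ?addr0 => [|l lj].
  by rewrite /diag_action_struct eqxx j0 andbT; case: (i == o); rewrite ?mul0r.
by rewrite /diag_action_struct (negbTE lj) andbF j0 mul0r.
Qed.

Lemma ce_entry_diag_action (S T : {set 'I_m.+1}) :
  ce_entry diag_action_struct S T =
  if (o \notin S) && (T == o |: S) then - \sum_(j in S) lam j else 0.
Proof.
rewrite /ce_entry; under eq_bigr => i _ do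
  under eq_bigr => j /andP[_ ij] do rewrite diag_action_bracket //.
have [oT|oT] := boolP (o \in T); last first.
  have -> : T == o |: S = false by apply: contraNF oT => /eqP ->; apply: setU11.
  rewrite andbF big1 // => i iT; rewrite big1 // => j _.
  by rewrite (_ : i == o = false) ?mulr0 //; apply: contraNF oT => /eqP <-.
have -> : (o \notin S) && (T == o |: S) = (S == T :\ o).
  apply/andP/eqP => [[oS /eqP ->]|->]; first by rewrite setU1K.
  by rewrite setD11 setD1K.
rewrite (bigD1 o) //= [X in _ + X]big1 ?addr0 => [|i /andP[_ /negbTE ->]]; last first.
  by rewrite big1 // => j _; rewrite mulr0.
rewrite setpos_ord0; have [->|nST] := eqVneq S (T :\ o); last first.
  rewrite big1 // => j /andP[jT j0].
  by rewrite ev_basis_setD1 ?(negbTE nST) ?mulr0 // !inE jT andbT -lt0n.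
rewrite -sumrN; apply: eq_big => [j|j /andP[jT j0]]; first by rewrite !inE andbC lt0n.
have jo : j != o by rewrite -lt0n.
rewrite ev_basis_setD1 ?eqxx; last by rewrite !inE jT andbT.
(* e_0 precedes e_j, so the two signs differ by one factor -1. *)
by rewrite setposD1_ord0 // add0n exprS mulN1r mulNr (mulrC (lam j)) signrMK.
Qed.

Definition zero_sum_sets (k : nat) : {set {set 'I_m.+1}} :=
  [set S : {set 'I_m.+1} | [&& #|S| == k, o \notin S & \sum_(j in S) lam j == 0]].

Definition nonzero_sum_sets (k : nat) : {set {set 'I_m.+1}} :=
  [set S : {set 'I_m.+1} | [&& #|S| == k, o \notin S & \sum_(j in S) lam j != 0]].

Lemma mxrank_ce_coboundaries_diag_action k :
  \rank (ce_coboundaries diag_action_struct k.+1) = #|nonzero_sum_sets k|.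
Proof.
rewrite -card_sidx; apply: (@mxrank_partial_monomial _ _ _ _ _
  (fun i => - \sum_(j in sidx i) lam j) (fun i => enum_rank (o |: sidx i))).
- by move=> i; rewrite inE oppr_eq0 => /and3P[].
- move=> i i'; rewrite !inE => /and3P[_ oi _] /and3P[_ oi' _] /enum_rank_inj eq_oi.
  by move/(congr1 (fun S => S :\ o)): eq_oi; rewrite !setU1K // => /enum_val_inj.
move=> i j; rewrite /= mxE (bigD1 i) //= big1 ?addr0 => [|i' /negbTE i'i]; last first.
  by rewrite mxE eq_sym i'i mul0r.
rewrite !mxE eqxx ce_entry_diag_action inE.
have -> : (sidx j == o |: sidx i) = (enum_rank (o |: sidx i) == j).
  by rewrite /sidx -(inj_eq enum_rank_inj) enum_valK eq_sym.
case: (_ == k); rewrite /= ?mul0r ?mul1r //; case: (_ \notin _) => //=.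
have [->|_] := eqVneq (\sum_(j in sidx i) lam j) 0.
  by rewrite oppr0 mul0r; case: ifP.
by case: (_ == j); rewrite ?mulr1 ?mulr0.
Qed.

Definition sets_off_ord0 (k : nat) : {set {set 'I_m.+1}} :=
  [set S : {set 'I_m.+1} | (#|S| == k) && (o \notin S)].

Definition sets_at_ord0 (k : nat) : {set {set 'I_m.+1}} :=
  [set S : {set 'I_m.+1} | (#|S| == k) && (o \in S)].

Lemma card_sets_off_ord0 k :
  #|sets_off_ord0 k| = (#|zero_sum_sets k| + #|nonzero_sum_sets k|)%N.
Proof.
rewrite -(cardsID [set S : {set 'I_m.+1} | \sum_(j in S) lam j == 0]).
congr (_ + _)%N; apply: eq_card => S; rewrite !inE -?andbA //.
by rewrite andbC -andbA.
Qed.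

Lemma card_sets_of_size k :
  #|[set S : {set 'I_m.+1} | #|S| == k]| =
  (#|sets_at_ord0 k| + #|sets_off_ord0 k|)%N.
Proof.
rewrite -(cardsID [set S : {set 'I_m.+1} | o \in S]).
by congr (_ + _)%N; apply: eq_card => S; rewrite !inE // andbC.
Qed.

Lemma card_sets_at_ord0 k :
  #|sets_at_ord0 k| = if k is k'.+1 then #|sets_off_ord0 k'| else 0%N.
Proof.
case: k => [|k].
  apply: eq_card0 => S; rewrite !inE cards_eq0.
  by apply/negbTE/andP => -[/eqP ->]; rewrite inE.
rewrite -[RHS](@card_in_imset _ _ (fun S => o |: S)) => [|S1 S2]; last first.
  rewrite !inE => /andP[_ oS1] /andP[_ oS2] eqS.
  by rewrite -(setU1K oS1) -(setU1K oS2) eqS.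
apply: eq_card => S; rewrite inE; apply/andP/imsetP => [[/eqP cardS oS]|[S' ]].
  exists (S :\ o); last by rewrite setD1K.
  by rewrite inE setD11 andbT -eqSS -cardS (cardsD1 o S) oS.
by rewrite inE => /andP[/eqP cardS' oS'] ->; rewrite setU11 cardsU1 oS' cardS'.
Qed.

Lemma mxrank_ce_cocycles_diag_action k :
  \rank (ce_cocycles diag_action_struct k) =
  (#|sets_at_ord0 k| + #|zero_sum_sets k|)%N.
Proof.
have := mxrank_mul_ker (ce_deg F m.+1 k) (ce_diff diag_action_struct).
rewrite -/(ce_coboundaries _ k.+1) mxrank_ce_coboundaries_diag_action mxrank_ce_deg.
by rewrite card_sets_of_size card_sets_off_ord0 /ce_cocycles; lia.
Qed.

Lemma betti_diag_action k :
  betti diag_action_struct k =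
  (#|zero_sum_sets k| + if k is k'.+1 then #|zero_sum_sets k'| else 0)%N.
Proof.
rewrite /betti mxrank_ce_cocycles_diag_action; case: k => [|k].
  by rewrite mxrank0 card_sets_at_ord0 !addn0 subn0.
rewrite mxrank_ce_coboundaries_diag_action card_sets_at_ord0 card_sets_off_ord0; lia.
Qed.

End DiagonalAction.

Lemma g_structE (R : realType) (n : nat) :
  g_struct R n = diag_action_struct (fun j : 'I_(n.*2.+2) => gweight R n j).
Proof. by []. Qed.

Section SymmetricWeights.
Variables (R : realType) (n : nat).
Local Notation I := 'I_(n.*2.+2).

Definition int_weight (j : I) : int := j%:Z - n.+1%:Z.

Definition weight_enum : seq I :=
  [seq inord (absz (x + n.+1%:Z)) | x <- sym_weights n].

Lemma map_int_weight_enum : map int_weight weight_enum = sym_weights n.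
Proof.
rewrite -map_comp -[RHS]map_id; apply/eq_in_map => x.
by rewrite mem_sym_weights /= /int_weight => x_bound; rewrite inordK; lia.
Qed.

Lemma uniq_weight_enum : uniq weight_enum.
Proof.
by apply: (@map_uniq _ _ int_weight); rewrite map_int_weight_enum uniq_sym_weights.
Qed.

Lemma mem_weight_enum j : (j \in weight_enum) = (j != ord0).
Proof.
apply/mapP/idP => [[x] + ->|jo].
  by rewrite mem_sym_weights -val_eqE /= => x_bound; rewrite inordK; lia.
exists (int_weight j); rewrite ?mem_sym_weights /int_weight.
  by move: jo; rewrite -val_eqE /=; have := ltn_ord j; lia.
by apply: ord_inj; rewrite /= inordK; have := ltn_ord j; lia.
Qed.

Lemma subset_weight_enum (S : {set I}) :
  (S \subset [set x in weight_enum]) = (ord0 \notin S).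
Proof.
apply/subsetP/idP => [sub|oS x xS].
  by apply/negP => /sub; rewrite inE mem_weight_enum.
by rewrite inE mem_weight_enum; apply: contraNneq oS => <-.
Qed.

Lemma sum_gweight_eq0 (S : {set I}) : (0 < n)%N ->
  (\sum_(j in S) gweight R n j == 0) = (\sum_(j in S) int_weight j == 0).
Proof.
move=> n_gt0; rewrite /gweight -mulr_suml mulf_eq0 invr_eq0 pnatr_eq0.
rewrite (negbTE (lt0n_neq0 n_gt0)) orbF.
rewrite -(intr_eq0 R) rmorph_sum; congr (_ == 0); apply: eq_bigr => j _.
by rewrite /int_weight rmorphB /= -!pmulrn.
Qed.

Lemma card_zero_sum_sets_gweight k : (0 < n)%N ->
  #|zero_sum_sets (fun j : I => gweight R n j) k| = subsum_count (sym_weights n) k 0.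
Proof.
move=> n_gt0; rewrite -map_int_weight_enum -card_subsets_with_sum ?uniq_weight_enum //.
apply: eq_card => S; rewrite !inE subset_weight_enum sum_gweight_eq0 //.
by rewrite andbCA.
Qed.

Lemma betti_g_struct k : (0 < n)%N ->
  betti (g_struct R n) k = (subsum_count (sym_weights n) k 0 +
    if k is k'.+1 then subsum_count (sym_weights n) k' 0 else 0)%N.
Proof.
move=> n_gt0; rewrite g_structE betti_diag_action card_zero_sum_sets_gweight //.
by case: k => [|k]; rewrite ?card_zero_sum_sets_gweight.
Qed.

End SymmetricWeights.

Local Close Scope ring_scope.
Unset Implicit Arguments.
Set Strict Implicit.

Theorem proposition4p14 (R : realType) (n : nat) : (2 <= n)%N ->
  let b := betti (g_struct R n) in
  [/\ [/\ b 0 = 1%N, b 1 = 2%N & b 2 = n.+1],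
      b 3 = (if odd n then (n + 1) ^ 2 %/ 2 else n * (n + 2) %/ 2),
      (forall k, odd k -> ~~ odd (b k)) &
      (forall k, b (2 * k)%N = 'C(n + 1, k) %[mod 2])].
Proof.
move=> n_ge2 b; have n_gt0 : (0 < n)%N by lia.
set z := fun k => subsum_count (sym_weights n) k 0.
have bE k : b k = (z k + if k is k'.+1 then z k' else 0)%N by exact: betti_g_struct.
have oddz k : odd (z k) = odd 'C(n, k./2) by exact: odd_subsum_count_sym_weights.
have z0 : z 0%N = 1%N by rewrite /z subsum_count0.
have z1 : z 1%N = 1%N by rewrite /z subsum_count1_sym_weights; lia.
have z2 : z 2%N = n by rewrite /z subsum_count2_sym_weights subn0.
split.
- by rewrite !bE z0 z1 z2; split; lia.
- by rewrite bE z2 subsum_count3_sym_weights.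
- move=> k k_odd; rewrite -(odd_double_half k) k_odd bE oddD !oddz.
  by rewrite half_bit_double doubleK addbb.
- case=> [|k]; first by rewrite bE z0 bin0.
  rewrite (_ : 2 * k.+1 = k.*2.+2)%N ?mul2n // bE !modn2 oddD !oddz /=.
  by rewrite uphalf_double doubleK addn1 binS oddD addbC.
Qed.
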